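(* Let $\mathcal{C}$ be a uniformly quasi-wide class of labelled graphs and let $\psi(x,y)$ be a first-order interpretation formula. Then for every $m\in\mathbb{N}$ there exists $p\in\mathbb{N}$ such that for every $H \in I_\psi(\mathcal{C})$, every independent set in the graph of the relation $\cong^{D,H}_m$ has size at most $p$.
   Context: All graphs are finite, simple, undirected and loopless; labelled graphs carry unary predicates $L_a$, $a\in Lab$, for a finite set $Lab$. $N(u)$ is the neighbourhood of $u$ and $D(u,v):=N(u)\,\Delta\,N(v)$. Differential game on a graph $H$ from tuples $\bar a=(a_1,\dots,a_k)$, $\bar b=(b_1,\dots,b_k)$: in each of $m$ rounds, with current tuples $(a_1,\dots,a_n),(b_1,\dots,b_n)$, Spoiler chooses an index $i\le n$ and a vertex $v\in D(a_i,b_i)$ and declares whether $v$ becomes $a_{n+1}$ or $b_{n+1}$ (if all $D(a_i,b_i)$ are empty, Duplicator wins); Duplicator answers with a vertex $w\in D(a_i,b_i)$ (same $i$) which becomes the other of $b_{n+1},a_{n+1}$. Duplicator wins at the end iff $a_i\mapsto b_i$ is a label-preserving isomorphism of the induced subgraphs (equalities, adjacencies and labels preserved). $u\cong^{D,H}_m v$ means Duplicator has a winning strategy in the $m$-round differential game on $H$ from $((u),(v))$. The graph of this relation has vertex set $V(H)$ and an edge between distinct $u,v$ iff $u\cong^{D,H}_m v$; an independent set in it is a set of vertices no two distinct of which are related. An interpretation formula is an FO formula $\psi(x,y)$ (over the vocabulary of labelled graphs) defining a symmetric irreflexive relation on every graph; $I_\psi(G)$ is the unlabelled graph on $V(G)$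 with edges $\{uv : G\models \psi(u,v)\}$, and $I_\psi(\mathcal{C})=\{I_\psi(G):G\in\mathcal{C}\}$. Uniformly quasi-wide: $\mathcal{C}$ is uniformly quasi-wide if for every $r\in\mathbb{N}$ there are a function $N:\mathbb{N}\to\mathbb{N}$ and a constant $s\in\mathbb{N}$ such that for every $k\in\mathbb{N}$, every $G\in\mathcal{C}$ and every $A\subseteq V(G)$ with $|A|\ge N(k)$ there is a set $S\subseteq V(G)$ with $|S|\le s$ such that $A\setminus S$ contains at least $k$ vertices with pairwise distance more than $r$ in $G\setminus S$. *)

From mathcomp Require Import all_boot.
Set Implicit Arguments. Unset Strict Implicit. Unset Printing Implicit Defensive.

Record LGraph (Lab : finType) := {
  V : finType;
  adj : rel V;
  adj_sym : symmetric adj;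
  adj_irr : irreflexive adj;
  lab : Lab -> pred V
}.

Inductive formula (Lab : Type) :=
| FEq  : nat -> nat -> formula Lab
| FAdj : nat -> nat -> formula Lab
| FLab : Lab -> nat -> formula Lab
| FNot : formula Lab -> formula Lab
| FAnd : formula Lab -> formula Lab -> formula Lab
| FOr  : formula Lab -> formula Lab -> formula Lab
| FEx  : nat -> formula Lab -> formula Lab
| FAll : nat -> formula Lab -> formula Lab.

Definition upd (T : Type) (env : nat -> T) (x : nat) (w : T) : nat -> T :=
  fun j => if j == x then w else env j.

Fixpoint sat (Lab : finType) (G : LGraph Lab) (f : formula Lab)
    (env : nat -> V G) : Prop :=
  match f with
  | FEq x y => env x = env y
  | FAdj x y => adj (env x) (env y)
  | FLab a x => lab a (env x)
  | FNot g => ~ sat g env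
  | FAnd g h => sat g env /\ sat h env
  | FOr g h => sat g env \/ sat h env
  | FEx x g => exists w : V G, sat g (upd env x w)
  | FAll x g => forall w : V G, sat g (upd env x w)
  end.

Fixpoint free_in (Lab : Type) (i : nat) (f : formula Lab) : bool :=
  match f with
  | FEq x y => (i == x) || (i == y)
  | FAdj x y => (i == x) || (i == y)
  | FLab _ x => i == x
  | FNot g => free_in i g
  | FAnd g h | FOr g h => free_in i g || free_in i h
  | FEx x g | FAll x g => (i != x) && free_in i g
  end.

(* assignment x := u (variable 0), y := v (variable 1) *)
Definition env2 (T : Type) (u v : T) : nat -> T :=
  fun i => if i == 0 then u else v.

Definition sat2 (Lab : finType) (G : LGraph Lab) (psi : formula Lab)
  (u v : V G) : Prop := sat psi (env2 u v).
Arguments sat2 {Lab} G psi u v.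

Definition interpretation_formula (Lab : finType) (psi : formula Lab) : Prop :=
  (forall i, 2 <= i -> ~~ free_in i psi) /\
  (forall (G : LGraph Lab) (u v : V G), sat2 G psi u v -> sat2 G psi v u) /\
  (forall (G : LGraph Lab) (u : V G), ~ sat2 G psi u u).

Definition I_rel (Lab : finType) (psi : formula Lab) (G : LGraph Lab)
  : V G -> V G -> Prop := fun u v => sat2 G psi u v.
Arguments I_rel {Lab} psi G u v.

Section Game.
Variables (T : finType) (e : T -> T -> Prop).

Definition inD (a b w : T) : Prop := ~ (e a w <-> e b w).

Definition partial_iso (a b : seq T) : Prop :=
  size a = size b /\
  forall (x0 : T) i j, i < size a -> j < size a ->
    (nth x0 a i = nth x0 a j <-> nth x0 b i = nth x0 b j) /\
    (e (nth x0 a i) (nth x0 a j) <-> e (nth x0 b i) (nth x0 b j)).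

(* Duplicator has a winning strategy in the m-round game from (a, b).
   (If all D(a_i,b_i) are empty, the universal quantification is vacuous, so
   Duplicator wins, as in the definition.) *)
Fixpoint dup_wins (m : nat) (a b : seq T) : Prop :=
  match m with
  | 0 => partial_iso a b
  | m'.+1 =>
    forall i, i < size a -> forall x0 : T,
      let ai := nth x0 a i in let bi := nth x0 b i in
      forall v, inD ai bi v ->
        (exists w, inD ai bi w /\ dup_wins m' (rcons a v) (rcons b w)) /\
        (exists w, inD ai bi w /\ dup_wins m' (rcons a w) (rcons b v))
  end.

Definition diff_equiv (m : nat) (u v : T) : Prop := dup_wins m [:: u] [:: v].

Definition independent_in (R : T -> T -> Prop) (S : {set T}) : Prop :=
  forall u v, u \in S -> v \in S -> u != v -> ~ R u v.
End Game.

(* Bounded-distance reachability avoiding the vertex set S: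
   within G \ S, y is at distance <= r from x (x, y assumed outside S). *)
Fixpoint near_avoid (Lab : finType) (G : LGraph Lab) (S : {set V G}) (r : nat)
    (x y : V G) : Prop :=
  match r with
  | 0 => x = y
  | r'.+1 => near_avoid S r' x y \/
             exists z, z \notin S /\ adj x z /\ near_avoid S r' z y
  end.

Definition uniformly_quasi_wide (Lab : finType) (C : LGraph Lab -> Prop) : Prop :=
  forall r : nat, exists (N : nat -> nat) (s : nat),
    forall (k : nat) (G : LGraph Lab), C G ->
    forall A : {set V G}, N k <= #|A| ->
      exists S : {set V G}, #|S| <= s /\
        exists B : {set V G}, B \subset A :\: S /\ k <= #|B| /\
          forall x y, x \in B -> y \in B -> x != y -> ~ near_avoid S r x y.

From mathcomp Require Import all_boot zify.
Set Implicit Arguments. Unset Strict Implicit. Unset Printing Implicit Defensive.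

(* Let q = m + qrank psi.  Uniform quasi-wideness for radius 2^(q+1) deletes a set T of
   at most s vertices and leaves many vertices of S pairwise far apart in G - T.  The
   local type of a tuple records its atomic type over an enumeration of T and,
   recursively, the types of its extensions by vertices at distance at most 2^j in
   G - T, where j is the number of remaining rounds; there are finitely many types for
   fixed s and q.  If u and v are far apart and have the same local type, Duplicator
   wins the q-round Ehrenfeucht-Fraisse game from u and v in both orders: a move close
   to one tuple is answered close to the other through the types, any other move is
   copied, and halving the radius keeps the two sides far apart.  This game preserves
   formulas of rank at most q, hence edges of I_psi(G), and because every answer is
   recorded in both orders it also keeps Duplicator inside D(a_i, b_i); so u and v are
   m-differentially equivalent.  By pigeonhole no independent set is larger than
   N(K + 1), where K is the number of local types. *)

Fixpoint qrank (Lab : Type) (f : formula Lab) : nat :=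
  match f with
  | FNot g => qrank g
  | FAnd g h | FOr g h => maxn (qrank g) (qrank h)
  | FEx _ g | FAll _ g => (qrank g).+1
  | _ => 0
  end.

Lemma not_injective_in (aT rT : finType) (f : aT -> rT) (A : {pred aT}) :
  #|rT| < #|A| -> exists u v, [/\ u \in A, v \in A, u != v & f u = f v].
Proof.
move=> small.
case: (boolP [exists u in A, exists v in A, (u != v) && (f u == f v)]).
  by case/exists_inP=> u uA /exists_inP[v vA /andP[uv /eqP fuv]]; exists u, v.
move/exists_inPn=> noncoll; suff: #|A| <= #|rT| by rewrite leqNgt small.
apply: (@leq_card_in _ _ f) => u v uA vA fuv; apply/eqP/negPn/negP => uv.
by move/exists_inPn/(_ v vA): (noncoll u uA); rewrite uv fuv eqxx.
Qed.

Lemma ord_cover (X : finType) (A : {set X}) s (x0 : X) :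
  #|A| <= s -> exists t : 'I_s -> X, {subset A <= codom t}.
Proof.
move=> As; exists (fun k => nth x0 (enum A) k) => x xA.
have ix : index x (enum A) < s by apply: leq_trans As; rewrite cardE index_mem mem_enum.
by apply/codomP; exists (Ordinal ix); rewrite /= nth_index ?mem_enum.
Qed.

Lemma mem_nth_zip (T1 T2 : eqType) (s : seq T1) (t : seq T2) x y i :
  size s = size t -> i < size s -> (nth x s i, nth y t i) \in zip s t.
Proof. by move=> st si; rewrite -nth_zip // mem_nth // size_zip st minnn -st. Qed.

Section SwapGame.
Variables (Lab : finType) (G : LGraph Lab).
Local Notation VG := (V G).
Local Notation E := (@adj Lab G).

Definition pairs_agree (p p' : VG * VG) : Prop :=
  (p.1 = p'.1 <-> p.2 = p'.2) /\ E p.1 p'.1 = E p.2 p'.2.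

Definition labels_agree (p : VG * VG) : Prop := forall a, lab a p.1 = lab a p.2.

Definition atomic (L : seq (VG * VG)) : Prop :=
  {in L &, forall p p', pairs_agree p p'} /\ {in L, forall p, labels_agree p}.

Lemma pairs_agree_sym p p' : pairs_agree p p' -> pairs_agree p' p.
Proof.
case: p p' => [x y] [x' y'] [/= e a].
by split=> /=; [split=> /esym/e/esym | rewrite adj_sym a adj_sym].
Qed.

Lemma pairs_agree_swap p p' :
  pairs_agree p p' -> pairs_agree (swap_pair p) (swap_pair p').
Proof. by case=> e a; split=> //=; split=> /e. Qed.

Lemma pairs_agree_diag x y : pairs_agree (x, x) (y, y).
Proof. by []. Qed.

(* Ehrenfeucht-Fraisse game on G in which Duplicator's answer y to a move x is recorded
   both as (x, y) and as (y, x), so that one quantifier covers both sides Spoiler may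
   play on. *)
Fixpoint swap_wins (q : nat) (L : seq (VG * VG)) : Prop :=
  if q is q'.+1 then atomic L /\ forall x, exists y, swap_wins q' [:: (x, y), (y, x) & L]
  else atomic L.

Lemma swap_wins_atomic q L : swap_wins q L -> atomic L.
Proof. by case: q => [|q] //= []. Qed.

Lemma upd_pairs x w y (e1 e2 : nat -> VG) L (g : formula Lab) :
  (forall i, (i != x) && free_in i g -> (e1 i, e2 i) \in L) ->
  forall i, free_in i g ->
    (upd e1 x w i, upd e2 x y i) \in [:: (w, y), (y, w) & L] /\
    (upd e1 x y i, upd e2 x w i) \in [:: (w, y), (y, w) & L].
Proof.
move=> hL i gi; rewrite /upd; case: (eqVneq i x) => [_|ix] /=.
  by rewrite !inE !eqxx ?orbT.
by rewrite !inE hL ?orbT // ix.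
Qed.

Lemma swap_wins_sat f q L (e1 e2 : nat -> VG) :
  qrank f <= q -> swap_wins q L -> (forall i, free_in i f -> (e1 i, e2 i) \in L) ->
  sat f e1 <-> sat f e2.
Proof.
elim: f q L e1 e2 => [x y|x y|a x|g IH|g IHg h IHh|g IHg h IHh|x g IH|x g IH]
  q L e1 e2 /= hq hS hL.
5,6: move: hq; rewrite geq_max => /andP[hg hh];
  have := IHg q L e1 e2 hg hS (fun i gi => hL i (introT orP (or_introl gi)));
  have := IHh q L e1 e2 hh hS (fun i hi => hL i (introT orP (or_intror hi))); tauto.
1,2: have hx : (e1 x, e2 x) \in L by apply: hL; rewrite eqxx.
1,2: have hy : (e1 y, e2 y) \in L by apply: hL; rewrite eqxx orbT.
1,2: have [/(_ _ _ hx hy) [eq_iff adj_eq] _] := swap_wins_atomic hS.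
- exact: eq_iff.
- by rewrite adj_eq.
- have [_ same_lab] := swap_wins_atomic hS.
  by rewrite (same_lab (e1 x, e2 x)) // hL ?eqxx.
- by have := IH q L e1 e2 hq hS hL; tauto.
- case: q hq hS => [//|q] hq [_ hS].
  split=> -[w hw]; have [y hy] := hS w; exists y.
    by apply: (IH _ _ _ _ hq hy _).1 hw => i /(upd_pairs w y hL)[].
  by apply: (IH _ _ _ _ hq hy _).2 hw => i /(upd_pairs w y hL)[].
- case: q hq hS => [//|q] hq [_ hS].
  split=> hw w; have [y hy] := hS w.
    by apply: (IH _ _ _ _ hq hy _).1 (hw y) => i /(upd_pairs w y hL)[].
  by apply: (IH _ _ _ _ hq hy _).2 (hw y) => i /(upd_pairs w y hL)[].
Qed.

Lemma swap_wins_I_rel psi q L a1 b1 a2 b2 :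
  qrank psi <= q -> swap_wins q L -> (a1, b1) \in L -> (a2, b2) \in L ->
  I_rel psi G a1 a2 <-> I_rel psi G b1 b2.
Proof. by move=> hq hS h1 h2; apply: (swap_wins_sat hq hS) => -[|[|i]]. Qed.

Lemma swap_wins_dup_wins psi j (a b : seq VG) L :
  swap_wins (j + qrank psi) L -> size a = size b ->
  {subset zip a b <= L} -> {subset zip b a <= L} ->
  dup_wins (I_rel psi G) j a b.
Proof.
elim: j a b L => [|j IH] a b L /= hS ab sub sub'.
  split=> // x0 i k ia ka.
  have ib := sub _ (mem_nth_zip x0 x0 ab ia); have kb := sub _ (mem_nth_zip x0 x0 ab ka).
  split; first exact: ((swap_wins_atomic hS).1 _ _ ib kb).1.
  exact: swap_wins_I_rel hS ib kb.
move=> i ia x0 v; set ai := nth x0 a i; set bi := nth x0 b i => vD.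
have [_ /(_ v) [w hw]] := hS; set L' := [:: (v, w), (w, v) & L] in hw.
have subL : {subset L <= L'} by move=> p pL; rewrite !inE pL !orbT.
have ba := esym ab.
have ib : (ai, bi) \in L' by apply/subL/sub/mem_nth_zip.
have ia' : (bi, ai) \in L' by apply/subL/sub'/mem_nth_zip; rewrite -?ab.
have vw : (v, w) \in L' by rewrite inE eqxx.
have wv : (w, v) \in L' by rewrite !inE eqxx orbT.
have hq : qrank psi <= j + qrank psi := leq_addl _ _.
have wD : inD (I_rel psi G) ai bi w.
  have := swap_wins_I_rel hq hw ib vw; have := swap_wins_I_rel hq hw ia' vw.
  by move: vD; rewrite /inD; tauto.
have zip_ext x y (s s' : seq VG) : size s = size s' -> {subset zip s s' <= L} ->
    (x, y) \in L' -> {subset zip (rcons s x) (rcons s' y) <= L'}.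
  by move=> ss' hs xy p; rewrite zip_rcons // mem_rcons inE => /orP[/eqP-> // | /hs/subL].
by split; exists w; split=> //; apply: IH hw _ _ _; rewrite ?size_rcons ?ab //;
  apply: zip_ext.
Qed.
End SwapGame.

Section Distance.
Variables (Lab : finType) (G : LGraph Lab) (T : {set V G}).
Local Notation VG := (V G).
Local Notation E := (@adj Lab G).

Fixpoint nearb (r : nat) (x y : VG) : bool :=
  if r is r'.+1 then nearb r' x y || [exists z, (z \notin T) && E x z && nearb r' z y]
  else x == y.

Lemma nearP r x y : reflect (near_avoid T r x y) (nearb r x y).
Proof.
elim: r x => [|r IH] x /=; first exact: eqP.
apply: (iffP orP) => [[/IH|/existsP[z /andP[/andP[zT xz] /IH]]]|[/IH|[z [zT [xz /IH]]]]];
  by [left | right; exists z | right; apply/existsP; exists z; rewrite zT xz].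
Qed.

Lemma nearb_refl r x : nearb r x x.
Proof. by elim: r => [|r IH] /=; rewrite ?eqxx ?IH. Qed.

Lemma nearb_mono r r' x y : r <= r' -> nearb r x y -> nearb r' x y.
Proof.
move=> /subnK <-; elim: (r' - r) => [//|k IH] near.
by rewrite addSn /= IH.
Qed.

Lemma nearb_trans a b x y z : nearb a x y -> nearb b y z -> nearb (a + b) x z.
Proof.
elim: a x => [|a IH] x /=; first by move/eqP=> ->.
case/orP=> [near|/existsP[w /andP[/andP[wT xw] near]]] near'.
  by rewrite IH.
by apply/orP; right; apply/existsP; exists w; rewrite wT xw IH.
Qed.

Lemma nearb_adj x y : y \notin T -> E x y -> nearb 1 x y.
Proof. by move=> yT xy; apply/orP; right; apply/existsP; exists y; rewrite yT xy /=. Qed.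

Lemma nearb_sym r x y : x \notin T -> y \notin T -> nearb r x y = nearb r y x.
Proof.
suff near_sym u v : u \notin T -> v \notin T -> nearb r u v -> nearb r v u.
  by move=> xT yT; apply/idP/idP; apply: near_sym.
elim: r u => [|r IH] u uT vT; first by rewrite /= eq_sym.
case/orP=> [near|/existsP[w /andP[/andP[wT uw] near]]].
  exact: nearb_mono (leqnSn r) (IH u uT vT near).
by rewrite -addn1 (nearb_trans (IH _ wT vT near) (nearb_adj uT _)) // adj_sym.
Qed.

Lemma far_mono r R x y : r <= R -> ~~ nearb R x y -> ~~ nearb r x y.
Proof. by move=> rR; apply: contra; apply: nearb_mono. Qed.

Lemma far_contract a b r R p x y q : nearb a p x -> nearb b y q -> a + r + b <= R ->
  ~~ nearb R p q -> ~~ nearb r x y.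
Proof.
move=> px yq sum_le; apply: contra => xy.
exact: nearb_mono sum_le (nearb_trans (nearb_trans px xy) yq).
Qed.

Lemma far_neq r x y : 0 < r -> ~~ nearb r x y -> x != y.
Proof. by move=> r_gt0; apply: contra => /eqP->; apply: nearb_refl. Qed.

Lemma far_nadj r x y : 0 < r -> y \notin T -> ~~ nearb r x y -> ~~ E x y.
Proof.
by move=> r_gt0 yT; apply: contra => xy; apply: nearb_mono r_gt0 (nearb_adj yT xy).
Qed.

Lemma far_pairs_agree r x y x' y' : 0 < r -> x' \notin T -> y' \notin T ->
  ~~ nearb r x y' -> ~~ nearb r y x' -> pairs_agree (x, y) (y', x').
Proof.
move=> r_gt0 x'T y'T far_xy' far_yx'.
have /eqP nxy := far_neq r_gt0 far_xy'; have /eqP nyx := far_neq r_gt0 far_yx'.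
split=> /=; first by split=> e; [case: (nxy e) | case: (nyx e)].
by rewrite (negbTE (far_nadj r_gt0 y'T far_xy')) (negbTE (far_nadj r_gt0 x'T far_yx')).
Qed.

Definition sball r x : {set VG} := [set z | (z \notin T) && nearb r x z].

Definition ball j n (c : nat -> VG) : {set VG} := \bigcup_(i < n) sball (2 ^ j) (c i).

Lemma ballP j n c z :
  reflect (z \notin T /\ exists2 i, i < n & nearb (2 ^ j) (c i) z) (z \in ball j n c).
Proof.
apply: (iffP bigcupP) => [[i _]|[zT [i lt_in near]]].
  by rewrite inE => /andP[zT near]; split=> //; exists i.
by exists (Ordinal lt_in); rewrite // inE zT.
Qed.

Lemma ball_mono j n c : ball j n c \subset ball j.+1 n c.
Proof.
apply/subsetP => z /ballP[zT [i lt_in near]]; apply/ballP; split=> //; exists i => //.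
by apply: nearb_mono near; rewrite leq_exp2l.
Qed.

Definition ext (c : nat -> VG) n x : nat -> VG := fun i => if i == n then x else c i.

Lemma ext_lt c n x i : i < n -> ext c n x i = c i.
Proof. by move=> lt_in; rewrite /ext ltn_eqF. Qed.

Lemma ext_all (P : VG -> Prop) c n x :
  P x -> (forall i, i < n -> P (c i)) -> forall i, i < n.+1 -> P (ext c n x i).
Proof.
move=> Px Pc i; rewrite ltnS leq_eqVlt => /orP[/eqP->|lt_in]; first by rewrite /ext eqxx.
by rewrite ext_lt //; apply: Pc.
Qed.

Lemma ball_ext j n c x : ball j n.+1 (ext c n x) = ball j n c :|: sball (2 ^ j) x.
Proof.
rewrite /ball big_ord_recr /= /ext eqxx; congr (_ :|: _).
by apply: eq_bigr => i _; rewrite ltn_eqF.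
Qed.

Lemma sball_sub_ball j n c x : x \in ball j n c -> sball (2 ^ j) x \subset ball j.+1 n c.
Proof.
case/ballP=> xT [i lt_in near]; apply/subsetP => z; rewrite inE => /andP[zT near'].
apply/ballP; split=> //; exists i => //.
by rewrite expnS mul2n -addnn (nearb_trans near near').
Qed.

Definition outside n (c : nat -> VG) : Prop := forall i, i < n -> c i \notin T.

Definition far_apart r n (c d : nat -> VG) : Prop :=
  forall i, i < n -> forall k, k < n -> ~~ nearb r (c i) (d k).

Lemma outside_ext n c x : x \notin T -> outside n c -> outside n.+1 (ext c n x).
Proof. exact: (@ext_all (fun u => u \notin T)). Qed.

Lemma ext_far_apart j n c d x y : outside n d ->
  far_apart (2 ^ j.+2) n c d -> x \in ball j n c -> y \in ball j n d ->
  far_apart (2 ^ j.+1) n.+1 (ext c n x) (ext d n y).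
Proof.
move=> d_out far /ballP[xT [i0 hi0 near_x]] /ballP[yT [k0 hk0 near_dy]].
have near_y : nearb (2 ^ j) y (d k0) by rewrite nearb_sym ?d_out.
have far_x k : k < n -> ~~ nearb (2 ^ j.+1) x (d k).
  move=> hk; apply: far_contract near_x (nearb_refl 0 _) _ (far i0 hi0 k hk).
  by rewrite !expnS; lia.
have far_y i : i < n -> ~~ nearb (2 ^ j.+1) (c i) y.
  move=> hi; apply: far_contract (nearb_refl 0 _) near_y _ (far i hi k0 hk0).
  by rewrite !expnS; lia.
have far_xy : ~~ nearb (2 ^ j.+1) x y.
  by apply: far_contract near_x near_y _ (far i0 hi0 k0 hk0); rewrite !expnS; lia.
pose far_ext u := forall k, k < n.+1 -> ~~ nearb (2 ^ j.+1) u (ext d n y k).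
apply: (@ext_all far_ext) => [|i hi]; apply: (@ext_all (fun v => ~~ nearb _ _ v)) => //.
  exact: far_y.
by move=> k hk; apply: far_mono (far i hi k hk); rewrite leq_exp2l.
Qed.

Lemma notin_ball_ext j n c d x y z :
  x \in ball j n c -> y \in ball j n d ->
  z \notin ball j.+1 n c :|: ball j.+1 n d ->
  z \notin ball j n.+1 (ext c n x) :|: ball j n.+1 (ext d n y).
Proof.
move=> xB yB; apply: contra; apply/subsetP; rewrite !ball_ext.
by rewrite setUSS // subUset ball_mono ?sball_sub_ball.
Qed.

End Distance.

Definition atom_type (Lab : finType) (s n : nat) : finType :=
  ({ffun 'I_n * 'I_n -> bool} * {ffun 'I_n * 'I_n -> bool} *
   {ffun Lab * 'I_n -> bool} * {ffun 'I_n * 'I_s -> bool})%type.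

Fixpoint ltype (Lab : finType) (s q n : nat) : finType :=
  if q is q'.+1 then (ltype Lab s q' n * {set ltype Lab s q' n.+1})%type
  else atom_type Lab s n.

Section LocalTypes.
Variables (Lab : finType) (G : LGraph Lab) (T : {set V G}) (s : nat) (t : 'I_s -> V G).
Local Notation VG := (V G).
Local Notation E := (@adj Lab G).
Local Notation nearb := (nearb T).
Local Notation ball := (ball T).
Local Notation outside := (outside T).

Definition atom n (c : nat -> VG) : atom_type Lab s n :=
  ([ffun ik : 'I_n * 'I_n => c ik.1 == c ik.2],
   [ffun ik : 'I_n * 'I_n => E (c ik.1) (c ik.2)],
   [ffun ai : Lab * 'I_n => lab ai.1 (c ai.2)],
   [ffun il : 'I_n * 'I_s => E (c il.1) (t il.2)]).

Fixpoint local_type q n (c : nat -> VG) : ltype Lab s q n :=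
  if q is q'.+1 then
    (local_type q' n c, [set local_type q' n.+1 (ext c n x) | x in ball q' n c])
  else atom n c.

Lemma local_type_down q n c d :
  local_type q.+1 n c = local_type q.+1 n d -> local_type q n c = local_type q n d.
Proof. by case. Qed.

Lemma local_type_atom q n c d :
  local_type q n c = local_type q n d -> atom n c = atom n d.
Proof. by elim: q => [//|q IH] /local_type_down. Qed.

Lemma local_type_ext q n c d x :
  local_type q.+1 n c = local_type q.+1 n d -> x \in ball q n c ->
  exists2 y, y \in ball q n d &
    local_type q n.+1 (ext c n x) = local_type q n.+1 (ext d n y).
Proof.
case=> _ same_ext xB; apply/imsetP.
by rewrite -same_ext imset_f.
Qed.

Lemma atom_pairs_agree n c d i k : atom n c = atom n d -> i < n -> k < n ->
  pairs_agree (c i, d i) (c k, d k).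
Proof.
case=> /ffunP same_eq /ffunP same_adj _ _ hi hk.
move: (same_eq (Ordinal hi, Ordinal hk)) (same_adj (Ordinal hi, Ordinal hk)).
rewrite !ffunE /= => e_eq e_adj.
by split=> //=; split=> e; apply/eqP; [rewrite -e_eq e | rewrite e_eq e].
Qed.

Lemma atom_labels_agree n c d i : atom n c = atom n d -> i < n -> labels_agree (c i, d i).
Proof.
by case=> _ _ /ffunP same_lab _ hi a; have := same_lab (a, Ordinal hi); rewrite !ffunE.
Qed.

Hypothesis T_codom : {subset T <= codom t}.

Lemma atom_adj_T n c d i z : atom n c = atom n d -> i < n -> z \in T ->
  E (c i) z = E (d i) z.
Proof.
case=> _ _ _ /ffunP same_adj hi /T_codom/codomP[l ->].
by have := same_adj (Ordinal hi, l); rewrite !ffunE.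
Qed.

Lemma atom_diag_agree j n c d i z : atom n c = atom n d -> i < n ->
  c i \notin T -> d i \notin T -> z \notin ball j n c :|: ball j n d ->
  pairs_agree (c i, d i) (z, z).
Proof.
move=> same_atom hi ciT diT; case: (boolP (z \in T)) => [zT _|zT].
  split=> /=; last exact: (atom_adj_T same_atom hi zT).
  by split=> e; move: ciT diT; rewrite e zT.
rewrite inE negb_or => /andP[/ballP zc /ballP zd].
apply: (@far_pairs_agree _ _ T (2 ^ j)); rewrite ?expn_gt0 //; apply/negP => near;
  [apply: zc | apply: zd]; by split=> //; exists i.
Qed.

(* Invariant of Duplicator's strategy with j rounds left: c and d are the moves made
   inside the balls, and every other position is a copy (z, z) of a vertex outside them. *)
Definition local_match j n (c d : nat -> VG) (L : seq (VG * VG)) : Prop :=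
  [/\ local_type j n c = local_type j n d, outside n c, outside n d,
      far_apart T (2 ^ j.+1) n c d &
      {in L, forall p, (exists2 i, i < n & p = (c i, d i) \/ p = (d i, c i)) \/
                       exists2 z, p = (z, z) & z \notin ball j n c :|: ball j n d}].

Lemma local_match_atomic j n c d L : local_match j n c d L -> atomic L.
Proof.
case=> /local_type_atom same_atom c_out d_out far hL.
have straight i k : i < n -> k < n -> pairs_agree (c i, d i) (c k, d k).
  exact: atom_pairs_agree.
have crossed i k : i < n -> k < n -> pairs_agree (c i, d i) (d k, c k).
  move=> hi hk; apply: (@far_pairs_agree _ _ T (2 ^ j.+1));
    rewrite ?expn_gt0 ?c_out ?d_out ?far //.
  by rewrite nearb_sym ?c_out ?d_out ?far.
have diag i z : i < n -> z \notin ball j n c :|: ball j n d ->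
    pairs_agree (c i, d i) (z, z).
  by move=> hi; apply: atom_diag_agree; rewrite ?c_out ?d_out.
split=> [p p' /hL[[i hi [->|->]]|[z -> hz]] /hL[[k hk [->|->]]|[z' -> hz']]|p].
- exact: straight.
- exact: crossed.
- exact: diag.
- exact: pairs_agree_swap (crossed i k hi hk).
- exact: pairs_agree_swap (straight i k hi hk).
- exact: pairs_agree_swap (diag i z' hi hz').
- exact: pairs_agree_sym (diag k z hk hz).
- exact: pairs_agree_sym (pairs_agree_swap (diag k z hk hz)).
- exact: pairs_agree_diag.
by case/hL=> [[i hi [->|->]]|[z -> _]] a //=; rewrite (atom_labels_agree same_atom hi a).
Qed.

Lemma local_match_down j n c d L : local_match j.+1 n c d L -> local_match j n c d L.
Proof.
case=> /local_type_down same_tp c_out d_out far hL; split=> //.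
  by move=> i hi k hk; apply: far_mono (far i hi k hk); rewrite leq_exp2l.
move=> p /hL[cross|[z -> hz]]; [by left | right; exists z => //].
by apply: contra hz; apply/subsetP; rewrite setUSS ?ball_mono.
Qed.

Lemma local_match_diag j n c d L z : local_match j n c d L ->
  z \notin ball j n c :|: ball j n d -> local_match j n c d [:: (z, z), (z, z) & L].
Proof.
case=> same_tp c_out d_out far hL hz; split=> // p.
by rewrite !inE orbA orbb => /orP[/eqP->|/hL //]; right; exists z.
Qed.

Lemma local_match_sub j n c d L L' : {subset L' <= L} ->
  local_match j n c d L -> local_match j n c d L'.
Proof. by move=> sub [same_tp c_out d_out far hL]; split=> // p /sub/hL. Qed.

Lemma local_match_sym j n c d L :
  local_match j n c d L -> local_match j n d c (map swap_pair L).
Proof.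
case=> same_tp c_out d_out far hL; split=> //.
  by move=> i hi k hk; rewrite nearb_sym ?c_out ?d_out ?far.
move=> _ /mapP[p /hL[[i hi [->|->]]|[z -> hz]] ->].
- by left; exists i => //; left.
- by left; exists i => //; right.
- by right; exists z; rewrite // setUC.
Qed.

Lemma local_match_ext j n c d L x : local_match j.+1 n c d L -> x \in ball j n c ->
  exists y, local_match j n.+1 (ext c n x) (ext d n y) [:: (x, y), (y, x) & L].
Proof.
case=> same_tp c_out d_out far hL xB.
have [y yB same_tp'] := local_type_ext same_tp xB; exists y.
have [/ballP[xT _] /ballP[yT _]] := conj xB yB.
split=> //; [exact: outside_ext | exact: outside_ext | exact: ext_far_apart |].
move=> p; rewrite !inE => /orP[/eqP->|/orP[/eqP->|/hL[[i hi e]|[z -> hz]]]].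
- by left; exists n; rewrite // /ext eqxx; left.
- by left; exists n; rewrite // /ext eqxx; right.
- by left; exists i; rewrite ?ext_lt // ltnW.
- by right; exists z; last exact: notin_ball_ext.
Qed.

Lemma local_match_swap_wins j n c d L : local_match j n c d L -> swap_wins j L.
Proof.
elim: j n c d L => [|j IH] n c d L h; first exact: local_match_atomic h.
split=> [|x]; first exact: local_match_atomic h.
case: (boolP (x \in ball j n c)) => [xc|xnc].
  by have [y hy] := local_match_ext h xc; exists y; apply: IH hy.
case: (boolP (x \in ball j n d)) => [xd|xnd].
  have [y hy] := local_match_ext (local_match_sym h) xd; exists y.
  apply: IH (local_match_sub _ (local_match_sym hy)) => p.
  by rewrite /= (mapK swap_pairK) !inE orbCA.
exists x; apply: IH (local_match_diag (local_match_down h) _).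
by rewrite inE negb_or xnc xnd.
Qed.

Lemma far_same_type_swap_wins q u v : u \notin T -> v \notin T ->
  ~~ nearb (2 ^ q.+1) u v -> local_type q 1 (fun=> u) = local_type q 1 (fun=> v) ->
  swap_wins q [:: (u, v); (v, u)].
Proof.
move=> uT vT far_uv same_tp; apply: (@local_match_swap_wins q 1 (fun=> u) (fun=> v)).
split=> // p.
by rewrite !inE => /orP[]/eqP->; left; exists 0 => //; [left | right].
Qed.

Lemma far_same_type_diff_equiv psi m u v : u \notin T -> v \notin T ->
  ~~ nearb (2 ^ (m + qrank psi).+1) u v ->
  local_type (m + qrank psi) 1 (fun=> u) = local_type (m + qrank psi) 1 (fun=> v) ->
  diff_equiv (I_rel psi G) m u v.
Proof.
move=> uT vT far_uv same_tp.
apply: swap_wins_dup_wins (far_same_type_swap_wins uT vT far_uv same_tp) _ _ _ => // p;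
  by rewrite !inE => /eqP->; rewrite eqxx ?orbT.
Qed.

End LocalTypes.

Theorem theorem6p8 (Lab : finType) (C : LGraph Lab -> Prop) (psi : formula Lab) :
  uniformly_quasi_wide C -> interpretation_formula psi ->
  forall m : nat, exists p : nat,
    forall G : LGraph Lab, C G ->
    forall S : {set V G},
      independent_in (diff_equiv (I_rel psi G) m) S -> #|S| <= p.
Proof.
move=> quasi_wide _ m; pose Q := m + qrank psi.
have [N [s sepN]] := quasi_wide (2 ^ Q.+1).
exists (N #|ltype Lab s Q 1|.+1) => G CG S indS; rewrite leqNgt; apply/negP => bigS.
have [T [Ts [B [BS [bigB farB]]]]] := sepN _ G CG S (ltnW bigS).
have [b0 _] : exists b0, b0 \in B by apply/card_gt0P; apply: leq_trans bigB.
have [t Tt] := ord_cover b0 Ts.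
have [u [v [uB vB uv same_tp]]] :=
  not_injective_in (fun u => local_type T t Q 1 (fun=> u)) bigB.
have /setDP[uS uT] := subsetP BS u uB; have /setDP[vS vT] := subsetP BS v vB.
have far_uv : ~~ nearb T (2 ^ Q.+1) u v by apply/negP => /nearP; apply: farB.
exact: indS uS vS uv (far_same_type_diff_equiv Tt uT vT far_uv same_tp).
Qed.
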